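(* For every $\mathcal{A}\subseteq\wp(\mathcal{G})$, $\mathrm{Ext}'(\mathcal{A})=\mathrm{Ext}(\mathcal{A})$, where $B\in\mathrm{Ext}'(\mathcal{A})$ iff either (i) there is some $f\in B$ with $f\in\mathcal{G}_{\gneq0}$, or (ii) there are finitely many $A_1,\ldots,A_n\in\mathcal{A}$ ($n\geq1$) such that for each $\langle g_1,\ldots,g_n\rangle\in A_1\times\cdots\times A_n$ with $0\notin\mathcal{E}(\{g_1,\ldots,g_n\})$, there exist $f\in B$ and $h\in\mathrm{posi}(\{g_1,\ldots,g_n\})$ with $f\geq h$.
   Context: $\Omega$ is a non-empty set and $\mathcal{G}$ is the set of bounded functions $\Omega\to\mathbb{R}$. $f\geq g$ means pointwise $\geq$; $f\gneq g$ means $f\geq g$ and $f\neq g$; $\mathcal{G}_{\gneq 0}=\{f: f\gneq 0\}$. $\mathrm{posi}(B)=\{\sum_{i=1}^m\lambda_i h_i: m\geq1,\lambda_i>0,h_i\in B\}$, and $\mathcal{E}(E):=\mathrm{posi}(E\cup\mathcal{G}_{\gneq 0})$. Definition of $\mathrm{Ext}$: if $\mathcal{A}\neq\emptyset$, $B\in\mathrm{Ext}(\mathcal{A})$ iff there are finitely many $A_1,\ldots,A_n\in\mathcal{A}$ ($n\geq1$) such that for each $\langle g_1,\ldots,g_n\rangle\in A_1\times\cdots\times A_n$ with $0\notin\mathcal{E}(\{g_1,\ldots,g_n\})$, there is some $f\in B$ with $f\in\mathcal{E}(\{g_1,\ldots,g_n\})$. If $\mathcal{A}=\emptyset$, $B\in\mathrm{Ext}(\emptyset)$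 iff $B\cap\mathcal{G}_{\gneq0}\neq\emptyset$. *)

From Stdlib Require Import Reals List.
Import ListNotations.
Open Scope R_scope.
Set Implicit Arguments.

Record gamble (Omega : Type) := Gamble {
  gf : Omega -> R;
  gbd : exists M : R, forall w, Rabs (gf w) <= M }.
Arguments gf {Omega} g w.

Definition gset (Omega : Type) := gamble Omega -> Prop.

Definition gge {Omega : Type} (f g : gamble Omega) : Prop :=
  forall w, gf g w <= gf f w.

Definition gpos {Omega : Type} (f : gamble Omega) : Prop :=
  (forall w, 0 <= gf f w) /\ (fun w => gf f w) <> (fun _ => 0).

Definition gzero_p {Omega : Type} (h : gamble Omega) : Prop :=
  forall w, gf h w = 0.

Definition posi {Omega : Type} (B : gset Omega) : gset Omega :=
  fun h => exists l : list (R * gamble Omega),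
    l <> [] /\
    Forall (fun p => 0 < fst p /\ B (snd p)) l /\
    forall w, gf h w = fold_right (fun p acc => fst p * gf (snd p) w + acc) 0 l.

Definition Eclos {Omega : Type} (E : gset Omega) : gset Omega :=
  posi (fun g => E g \/ gpos g).

Definition setOf {Omega : Type} (gs : list (gamble Omega)) : gset Omega :=
  fun g => In g gs.

Definition zero_notin_E {Omega : Type} (gs : list (gamble Omega)) : Prop :=
  ~ (exists h, Eclos (setOf gs) h /\ gzero_p h).

Definition ExtCond {Omega : Type} (cA : gset Omega -> Prop) (B : gset Omega) : Prop :=
  exists As : list (gset Omega),
    As <> [] /\ Forall cA As /\
    forall gs : list (gamble Omega),
      Forall2 (fun g A => A g) gs As ->
      zero_notin_E gs ->
      exists f, B f /\ Eclos (setOf gs) f.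

Definition Ext {Omega : Type} (cA : gset Omega -> Prop) (B : gset Omega) : Prop :=
  ((exists A, cA A) /\ ExtCond cA B) \/
  ((forall A, ~ cA A) /\ exists f, B f /\ gpos f).

Definition Ext' {Omega : Type} (cA : gset Omega -> Prop) (B : gset Omega) : Prop :=
  (exists f, B f /\ gpos f) \/
  (exists As : list (gset Omega),
    As <> [] /\ Forall cA As /\
    forall gs : list (gamble Omega),
      Forall2 (fun g A => A g) gs As ->
      zero_notin_E gs ->
      exists f h, B f /\ posi (setOf gs) h /\ gge f h).

(* Both conditions quantify over the same tuples; they differ only in what they ask of B
   for a tuple S = {g_1, ..., g_n}.  Every element of E(S) is a positive combination of
   elements of S and of nonzero nonnegative gambles: either only the latter occur, and the
   element lies in G_{>0}, or dropping them leaves some h in posi(S) below it.  Conversely,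
   if f >= h with h in posi(S), then f = h or f = h + (f - h) with f - h in G_{>0}, so f is
   in E(S); and any f in G_{>0} is in E(S) outright, which handles clause (i) whenever the
   family A is nonempty. *)
From Stdlib Require Import Reals List.
From Stdlib Require Import Classical FunctionalExtensionality Lra.
Import ListNotations.
Open Scope R_scope.

Section Gambles.

Context {Omega : Type}.

Definition lincomb (l : list (R * gamble Omega)) (w : Omega) : R :=
  fold_right (fun p acc => fst p * gf (snd p) w + acc) 0 l.

Lemma lincomb_bounded (l : list (R * gamble Omega)) :
  exists M, forall w, Rabs (lincomb l w) <= M.
Proof.
  induction l as [|[c g] l [M HM]]; simpl.
  - exists 0; intro w; unfold lincomb; simpl; rewrite Rabs_R0; lra.
  - destruct (gbd g) as [Mg HMg].
    exists (Rabs c * Mg + M); intro w; unfold lincomb; simpl; fold (lincomb l w).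
    eapply Rle_trans; [apply Rabs_triang|].
    rewrite Rabs_mult; apply Rplus_le_compat; [|apply HM].
    apply Rmult_le_compat_l; [apply Rabs_pos|apply HMg].
Qed.

Lemma lincomb_nonneg (l : list (R * gamble Omega)) :
  Forall (fun p => 0 < fst p /\ gpos (snd p)) l -> forall w, 0 <= lincomb l w.
Proof.
  induction 1 as [|[c g] l [Hc [Hg _]] _ IH]; intro w; unfold lincomb in *; simpl; [lra|].
  specialize (Hg w); specialize (IH w); simpl in *; nra.
Qed.

Lemma gpos_lincomb (f : gamble Omega) (l : list (R * gamble Omega)) :
  l <> [] -> Forall (fun p => 0 < fst p /\ gpos (snd p)) l ->
  (forall w, gf f w = lincomb l w) -> gpos f.
Proof.
  intros Hl Hpos Hf; split.
  - intro w; rewrite Hf; apply lincomb_nonneg, Hpos.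
  - destruct l as [|[c g] l]; [congruence|].
    inversion Hpos as [|? ? [Hc [Hg Hgnz]] Hrest]; subst; simpl in *.
    intro Hzero; apply Hgnz, functional_extensionality; intro w.
    pose proof (equal_f Hzero w) as Hw; simpl in Hw.
    rewrite Hf in Hw; unfold lincomb in Hw; simpl in Hw; fold (lincomb l w) in Hw.
    pose proof (lincomb_nonneg l Hrest w); specialize (Hg w); nra.
Qed.

Lemma posi_mono (S T : gset Omega) (h : gamble Omega) :
  (forall g, S g -> T g) -> posi S h -> posi T h.
Proof.
  intros HST [l [Hl [Hfl Hh]]]; exists l; repeat split; auto.
  eapply Forall_impl; [|exact Hfl]; simpl; intuition.
Qed.

Lemma gpos_Eclos (S : gset Omega) (f : gamble Omega) : gpos f -> Eclos S f.
Proof.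
  intro Hf; exists [(1, f)]; repeat split; [congruence| |].
  - constructor; simpl; auto; split; [lra|auto].
  - intro w; simpl; ring.
Qed.

Lemma gsub_bounded (f h : gamble Omega) :
  exists M, forall w, Rabs (gf f w - gf h w) <= M.
Proof.
  destruct (gbd f) as [Mf Hf], (gbd h) as [Mh Hh].
  exists (Mf + Mh); intro w; unfold Rminus.
  eapply Rle_trans; [apply Rabs_triang|]; rewrite Rabs_Ropp.
  apply Rplus_le_compat; auto.
Qed.

Definition gsub (f h : gamble Omega) : gamble Omega :=
  Gamble (fun w => gf f w - gf h w) (gsub_bounded f h).

Lemma Eclos_of_ge_posi (S : gset Omega) (f h : gamble Omega) :
  posi S h -> gge f h -> Eclos S f.
Proof.
  intros [l [Hl [Hfl Hh]]] Hfh.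
  assert (HlE : Forall (fun p => 0 < fst p /\ (S (snd p) \/ gpos (snd p))) l).
  { eapply Forall_impl; [|exact Hfl]; simpl; intuition. }
  destruct (classic ((fun w => gf f w - gf h w) = (fun _ => 0))) as [Heq|Hneq].
  - exists l; repeat split; auto.
    intro w; pose proof (equal_f Heq w) as Hw; simpl in Hw; rewrite <- Hh; lra.
  - exists ((1, gsub f h) :: l); repeat split; [congruence| |].
    + constructor; auto; simpl; split; [lra|right].
      split; [intro w; specialize (Hfh w); simpl; lra|exact Hneq].
    + intro w; simpl; rewrite <- Hh; ring.
Qed.

Lemma lincomb_drop_gpos (S : gset Omega) (l : list (R * gamble Omega)) :
  Forall (fun p => 0 < fst p /\ (S (snd p) \/ gpos (snd p))) l ->
  Forall (fun p => 0 < fst p /\ gpos (snd p)) l \/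
  exists l', l' <> [] /\ Forall (fun p => 0 < fst p /\ S (snd p)) l' /\
    forall w, lincomb l' w <= lincomb l w.
Proof.
  induction 1 as [|[c g] l [Hc [HS|Hg]] _ [Hpos|[l' [Hl' [Hfl' Hle]]]]].
  - left; constructor.
  - right; exists [(c, g)]; repeat split; [congruence|constructor; auto|].
    intro w; pose proof (lincomb_nonneg l Hpos w); unfold lincomb in *; simpl in *; lra.
  - right; exists ((c, g) :: l'); repeat split; [congruence|constructor; auto|].
    intro w; specialize (Hle w); unfold lincomb in *; simpl in *; lra.
  - left; constructor; auto.
  - right; exists l'; repeat split; auto.
    intro w; specialize (Hle w); destruct Hg as [Hg _]; specialize (Hg w).
    unfold lincomb in *; simpl in *; nra.
Qed.

Lemma Eclos_gpos_or_ge_posi (S : gset Omega) (f : gamble Omega) :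
  Eclos S f -> gpos f \/ exists h, posi S h /\ gge f h.
Proof.
  intros [l [Hl [Hfl Hf]]].
  destruct (lincomb_drop_gpos S l Hfl) as [Hpos|[l' [Hl' [Hfl' Hle]]]].
  - left; exact (gpos_lincomb f l Hl Hpos Hf).
  - right; exists (Gamble (lincomb l') (lincomb_bounded l')); split.
    + exists l'; repeat split; auto.
    + intro w; simpl; rewrite Hf; apply Hle.
Qed.

Lemma Ext'_Ext (cA : gset Omega -> Prop) (B : gset Omega) :
  Ext' cA B -> Ext cA B.
Proof.
  intros [[f [Hf Hfpos]]|[As [HAs [HAsA Hcond]]]].
  - destruct (classic (exists A, cA A)) as [[A HA]|HnoA].
    + left; split; [eauto|].
      exists [A]; repeat split; [congruence|auto|].
      intros gs _ _; exists f; split; [exact Hf|apply gpos_Eclos, Hfpos].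
    + right; split; eauto.
  - left; split.
    + destruct As as [|A As]; [congruence|]; inversion HAsA; eauto.
    + exists As; repeat split; auto.
      intros gs Hgs Hz; destruct (Hcond gs Hgs Hz) as [f [h [Hf [Hh Hfh]]]].
      exists f; split; [exact Hf|exact (Eclos_of_ge_posi _ f h Hh Hfh)].
Qed.

Lemma Ext_Ext' (cA : gset Omega -> Prop) (B : gset Omega) :
  Ext cA B -> Ext' cA B.
Proof.
  intros [[_ [As [HAs [HAsA Hcond]]]]|[_ HBpos]]; [|left; exact HBpos].
  destruct (classic (exists f, B f /\ gpos f)) as [HBpos|HnoBpos]; [left; exact HBpos|].
  right; exists As; repeat split; auto.
  intros gs Hgs Hz; destruct (Hcond gs Hgs Hz) as [f [Hf HfE]].
  destruct (Eclos_gpos_or_ge_posi _ f HfE) as [Hfpos|[h [Hh Hfh]]].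
  - exfalso; eauto.
  - exists f, h; auto.
Qed.

End Gambles.

Theorem mainTheorem4 (Omega : Type) (w0 : Omega)
  (cA : gset Omega -> Prop) (B : gset Omega) :
  Ext' cA B <-> Ext cA B.
Proof.
  split; [apply Ext'_Ext|apply Ext_Ext'].
Qed.
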